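(* Suppose an sAEDS has $M_s:=N/N_s$ an integer for every $s\in\mathcal S$, satisfies $|\mathcal F^+_x|=M_s$ for every $x\in\mathcal X_s$ and every $s$, and, for a stationary distribution $Q$ of its state chain, uses for each $x\in\mathcal X_s$ a phased-in code on $\mathcal F^+_x$ with $M_s$ codewords matched to $Q$ restricted to $\mathcal F^+_x$ (i.e. $\hat x\mapsto E_{\hat x}(s)$ on $\mathcal F^+_x$ is this code). Then its average code length satisfies $$L\le H(p)+D(p\|q)+\sigma,\qquad \sigma=\lg\lg e+1-\lg e\approx0.08607.$$
   Context: Let $\mathcal S$ be a finite alphabet with $|\mathcal S|\ge 2$ and $p=\{p(s)\}$ a probability distribution with $p(s)>0$ for all $s$ (i.i.d. source). $\mathcal B=\{0,1\}^*$ (including the empty word), $l(\beta)$ the word length, $\lg=\log_2$. An AEDS with finite state set $\mathcal X$, $|\mathcal X|=N$, consists of maps $E_{\hat x}:\mathcal S\to\mathcal B$ and $F^-_{\hat x}:\mathcal S\to\mathcal X$ ($\hat x\in\mathcal X$) such that for every $x\in\mathcal X$ the words $E_{\hat x}(s)$ over all pairs $(\hat x,s)$ with $F^-_{\hat x}(s)=x$ are pairwise distinct and form a prefix-free set. The state chain is the Markov chain on $\mathcal X$ moving from $\hat x$ to $F^-_{\hat x}(s)$ with probability $p(s)$; for a stationary distribution $Q$ the average code length is $L=\sum_{\hat x}\sum_s p(s)Q(\hat x)l(E_{\hat x}(s))$. A state-divided AEDS (sAEDS) is an AEDS for which the sets $\mathcal X_s=\{F^-_{\hat x}(s):\hat x\in\mathcal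 X\}$ are pairwise disjoint with union $\mathcal X$; $N_s=|\mathcal X_s|$, $q(s)=N_s/N$. For $x\in\mathcal X_s$, $\mathcal F^+_x=\{\hat x: F^-_{\hat x}(s)=x\}$; for each $s$ these sets partition $\mathcal X$. An sAEDS is thus specified by the partitions and, for each $x\in\mathcal X_s$, an injective prefix-free code $\hat x\mapsto E_{\hat x}(s)$ on $\mathcal F^+_x$; the state chain (hence $Q$) depends only on $p$ and the partitions. Phased-in code: for an integer $M\ge1$ and $k=\lceil\lg M\rceil$, a prefix-free code on an $M$-element set with $2^k-M$ codewords of length $k-1$ and $2M-2^k$ codewords of length $k$ (for $M=1$, the single empty word). It is matched to a distribution on that set if the length-$(k-1)$ codewords go to $2^k-M$ elements of largest probability. $H(p)=-\sum_s p(s)\lg p(s)$, $D(p\|q)=\sum_s p(s)\lg(p(s)/q(s))$. *)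

From HB Require Import structures.
From mathcomp Require Import all_boot all_order all_algebra.
From mathcomp Require Import all_classical all_reals all_analysis.
Set Implicit Arguments. Unset Strict Implicit. Unset Printing Implicit Defensive.
Import Order.TTheory GRing.Theory Num.Theory.
Local Open Scope ring_scope.

Section AEDSDefs.
Variables (R : realType) (S X : finType).

Definition lg (x : R) : R := ln x / ln 2.

Definition entropy (p : S -> R) : R := - \sum_s p s * lg (p s).
Definition divergence (p q : S -> R) : R := \sum_s p s * lg (p s / q s).
Definition sigma_const : R := lg (lg (expR 1)) + 1 - lg (expR 1).

(* AEDS condition: for every state x, the words E_xh(s) over all pairs
   (xh,s) with F^-_xh(s) = x are pairwise distinct and prefix-free, i.e.
   no word of a distinct pair is a prefix of another (which also forces
   distinctness). *)
Definition is_AEDS (E : X -> S -> seq bool) (F : X -> S -> X) : Prop :=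
  forall (x : X) (a b : X * S), a != b ->
    F a.1 a.2 = x -> F b.1 b.2 = x -> ~~ prefix (E a.1 a.2) (E b.1 b.2).

Definition Xs (F : X -> S -> X) (s : S) : {set X} := [set F xh s | xh in X].
Definition Ns (F : X -> S -> X) (s : S) : nat := #|Xs F s|.
Definition Fplus (F : X -> S -> X) (s : S) (x : X) : {set X} :=
  [set xh | F xh s == x].
Definition qdist (F : X -> S -> X) (s : S) : R := (Ns F s)%:R / (#|X|)%:R.

Definition is_sAEDS (F : X -> S -> X) : Prop :=
  (forall s s', s != s' -> [disjoint Xs F s & Xs F s']) /\
  \bigcup_(s : S) Xs F s = [set: X].

(* Q is a stationary distribution of the state chain xh -> F xh s w.p. p s *)
Definition is_stationary (p : S -> R) (F : X -> S -> X) (Q : X -> R) : Prop :=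
  (forall x, 0 <= Q x) /\ \sum_x Q x = 1 /\
  forall x, Q x = \sum_xh \sum_(s | F xh s == x) Q xh * p s.

(* c : A -> B is a phased-in code on the M-element set A (M = #|A|, k = ceil lg M):
   prefix-free and injective, every codeword has length k-1 or k, exactly
   2M - 2^k codewords have length k (hence 2^k - M have length k-1);
   matched to Q: every element with a short codeword has Q-probability at
   least that of every element with a length-k codeword. *)
Definition phased_in_matched (Q : X -> R) (A : {set X}) (c : X -> seq bool) : Prop :=
  let M := #|A| in let k := up_log 2 M in
  (forall x y, x \in A -> y \in A -> x != y -> ~~ prefix (c x) (c y)) /\
  (forall x, x \in A -> size (c x) = k \/ size (c x) = k.-1) /\
  #|[set x in A | size (c x) == k]| = (2 * M - 2 ^ k)%N /\
  (forall x y, x \in A -> y \in A -> (size (c x) < k)%N -> size (c y) = k ->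
     Q y <= Q x).

Definition avg_len (p : S -> R) (Q : X -> R) (E : X -> S -> seq bool) : R :=
  \sum_xh \sum_s p s * Q xh * (size (E xh s))%:R.

End AEDSDefs.

(* Split the average length according to the emitted symbol s.  The states
   xh with F^-_xh(s) = x form a block F^+_x of M_s = N/N_s states carrying a
   phased-in code; with k = ceil (lg M_s) its short codewords are the heavier
   ones, so they carry at least a share r - 1 of the block weight, where
   r = 2^k / M_s.  Hence the Q-weighted length of the block is at most
   k + 1 - r = lg M_s + (1 - r + lg r) <= lg M_s + sigma times its weight.
   Averaging over s with weights p(s) gives sum_s p(s) lg (1/q(s)) + sigma,
   and sum_s p(s) lg (1/q(s)) is exactly H(p) + D(p||q). *)

From HB Require Import structures.
From mathcomp Require Import all_boot all_order all_algebra.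
From mathcomp Require Import all_classical all_reals all_analysis.
From mathcomp Require Import lra zify.
Import Order.TTheory GRing.Theory Num.Theory.
Local Open Scope ring_scope.

Lemma expn_up_log2_le_double (n : nat) :
  (0 < n)%N -> (2 ^ up_log 2 n <= 2 * n)%N.
Proof.
move=> n_gt0; have [n_le1 | n_gt1] := leqP n 1.
  by rewrite (eqP (_ : up_log 2 n == 0%N)) ?up_log_eq0 ?n_le1 ?orbT // muln_gt0.
have k_gt0 : (0 < up_log 2 n)%N by rewrite up_log_gt0 n_gt1.
rewrite -(prednK k_gt0) expnS leq_mul2l /=.
exact/ltnW/up_log_gtn.
Qed.

Section BinaryLogarithm.
Context {R : realType}.

Lemma ln2_gt0 : 0 < ln (2 : R).
Proof. by apply: ln_gt0; lra. Qed.

Lemma lgM (x y : R) : 0 < x -> 0 < y -> lg (x * y) = lg x + lg y.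
Proof. by move=> x_gt0 y_gt0; rewrite /lg lnM ?posrE // mulrDl. Qed.

Lemma lgV (x : R) : 0 < x -> lg x^-1 = - lg x.
Proof. by move=> x_gt0; rewrite /lg lnV ?posrE // mulNr. Qed.

Lemma lg_expn2 (k : nat) : lg ((2 ^ k)%:R : R) = k%:R.
Proof.
rewrite /lg natrX lnXn ?ltr0n // -[ln 2 *+ k]mulr_natr mulrAC mulfV ?mul1r //.
by rewrite gt_eqF ?ln2_gt0.
Qed.

Lemma ln_le_subr1 (y : R) : 0 < y -> ln y <= y - 1.
Proof.
by move=> y_gt0; have := expR_ge1Dx (ln y); rewrite lnK ?posrE // => h; lra.
Qed.

(* sigma is the maximum of 1 - x + lg x, attained at x = lg e; the bound is
   ln y <= y - 1 at y = x ln 2. *)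
Lemma subr_lg_le_sigma {x : R} : 0 < x -> 1 - x + lg x <= sigma_const R.
Proof.
move=> x_gt0; rewrite /sigma_const /lg expRK div1r lnV ?posrE ?ln2_gt0 //.
set t := (ln (2 : R))^-1.
have t_gt0 : 0 < t by rewrite invr_gt0 ln2_gt0.
have ln_bound : ln x + ln (ln (2 : R)) <= x * ln 2 - 1.
  by rewrite -lnM ?posrE ?ln2_gt0 //; apply/ln_le_subr1/mulr_gt0/ln2_gt0.
have /(ler_wpM2r (ltW t_gt0)) : _ := ln_bound.
rewrite mulrDl mulrBl -mulrA mulfV ?gt_eqF ?ln2_gt0 // mulr1 mul1r !mulNr.
lra.
Qed.

End BinaryLogarithm.

Lemma cross_sum_le {R : numDomainType} {T : finType} {f : T -> R}
    {A B : {set T}} :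
  (forall a b, a \in A -> b \in B -> f b <= f a) ->
  #|A|%:R * \sum_(b in B) f b <= #|B|%:R * \sum_(a in A) f a.
Proof.
move=> f_AB; rewrite !mulr_natl -!sumr_const [leRHS]exchange_big /=.
by apply: ler_sum => a aA; apply: ler_sum => b bB; exact: f_AB.
Qed.

Section PhasedInCode.
Variables (R : realType) (X : finType) (Q : X -> R).
Variables (A : {set X}) (c : X -> seq bool).
Hypotheses (Q_ge0 : forall x, 0 <= Q x) (A_gt0 : (0 < #|A|)%N).
Hypothesis code : phased_in_matched Q A c.

Let M := #|A|.
Let k := up_log 2 M.
Let long := [set x in A | size (c x) == k].
Let short := A :\: long.

Let long_sub : long \subset A.
Proof. by apply/fintype.subsetP => x; rewrite inE => /andP[]. Qed.

Lemma card_phased_in_long : #|long| = (2 * M - 2 ^ k)%N.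
Proof. by have [_ [_ []]] := code. Qed.

Lemma card_phased_in_short : #|short| = (2 ^ k - M)%N.
Proof.
have := cardsID long A.
rewrite (finset.setIidPr long_sub) card_phased_in_long -/M.
have := @up_logP 2 M isT; have := expn_up_log2_le_double M A_gt0.
rewrite -/k -/short; lia.
Qed.

Lemma size_phased_in_short {x} : x \in short -> (size (c x)).+1 = k.
Proof.
rewrite /short /long !inE => /andP[not_long xA]; rewrite xA /= in not_long.
have [_ [size_c _]] := code.
case: (size_c x xA) => size_cx; first by rewrite size_cx eqxx in not_long.
by move: not_long; rewrite size_cx -/M -/k; case: k.
Qed.

Lemma phased_in_weighted_len :
  \sum_(x in A) Q x * (size (c x))%:R =
  k%:R * \sum_(x in A) Q x - \sum_(x in short) Q x.
Proof.
have long_len : \sum_(x in A :&: long) Q x * (size (c x))%:R =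
                k%:R * \sum_(x in A :&: long) Q x.
  rewrite mulr_sumr; apply: eq_bigr => x /setIP[_].
  by rewrite inE => /andP[_ /eqP ->]; rewrite mulrC.
have short_len : \sum_(x in short) Q x * (size (c x))%:R =
                 (k%:R - 1) * \sum_(x in short) Q x.
  rewrite mulr_sumr; apply: eq_bigr => x /size_phased_in_short <-.
  by rewrite -natr1 addrK mulrC.
rewrite (big_setID long) [\sum_(x in A) Q x](big_setID long) /= -/short.
rewrite long_len short_len; lra.
Qed.

Lemma phased_in_short_weight :
  ((2 ^ k)%:R - M%:R) * \sum_(x in A) Q x <= M%:R * \sum_(x in short) Q x.
Proof.
have heavier_short a b : a \in short -> b \in long -> Q b <= Q a.
  have [_ [_ [_ matched]]] := code; move=> a_short b_long.
  have /finset.setDP[aA _] := a_short.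
  move: b_long; rewrite inE => /andP[bA /eqP size_cb].
  by apply: matched => //; rewrite -/M -/k -(size_phased_in_short a_short).
have := cross_sum_le heavier_short.
rewrite card_phased_in_short card_phased_in_long.
have := @up_logP 2 M isT; have := expn_up_log2_le_double M A_gt0.
rewrite -/k => le_2k_2M le_M_2k.
rewrite !natrB // natrM [\sum_(x in A) Q x](big_setID long) /=.
rewrite (finset.setIidPr long_sub) -/short; nra.
Qed.

Lemma phased_in_weighted_len_le :
  \sum_(x in A) Q x * (size (c x))%:R <=
  (\sum_(x in A) Q x) * (lg M%:R + sigma_const R).
Proof.
set W := \sum_(x in A) Q x; set W_short := \sum_(x in short) Q x.
have W_ge0 : 0 <= W by apply: sumr_ge0.
have M_gt0 : 0 < (M%:R : R) by rewrite ltr0n.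
pose ratio := (2 ^ k)%:R / (M%:R : R).
have ratio_gt0 : 0 < ratio by rewrite divr_gt0 // ltr0n expn_gt0.
have lg_ratio : lg ratio = k%:R - lg M%:R.
  by rewrite lgM ?invr_gt0 ?ltr0n ?expn_gt0 // lgV // lg_expn2.
have short_share : (ratio - 1) * W <= W_short.
  have -> : ratio - 1 = ((2 ^ k)%:R - M%:R) / M%:R.
    by rewrite mulrBl mulfV ?gt_eqF.
  rewrite mulrAC ler_pdivrMr // [W_short * _]mulrC.
  exact: phased_in_short_weight.
have := subr_lg_le_sigma ratio_gt0; rewrite lg_ratio => sigma_bound.
have : W * (k%:R + 1 - ratio) <= W * (lg M%:R + sigma_const R).
  by apply: ler_wpM2l => //; lra.
rewrite phased_in_weighted_len -/W -/W_short; nra.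
Qed.

End PhasedInCode.

Lemma fibers_phased_in_weighted_len_le {R : realType} {X Y : finType}
    (Q : X -> R) (f : X -> Y) (c : X -> seq bool) (M : nat) :
  (forall x, 0 <= Q x) ->
  (forall y, y \in [set f x | x in X] -> #|[set x | f x == y]| = M) ->
  (forall y, y \in [set f x | x in X] ->
     phased_in_matched Q [set x | f x == y] c) ->
  \sum_x Q x * (size (c x))%:R <= (\sum_x Q x) * (lg M%:R + sigma_const R).
Proof.
move=> Q_ge0 card_fiber code_fiber.
rewrite (partition_big_imset f) [\sum_x Q x](partition_big_imset f) mulr_suml.
apply: ler_sum => y y_im.
have fiberE (F : X -> R) :
    \sum_(x in xpredT | f x == y) F x = \sum_(x in [set x | f x == y]) F x.
  by apply: eq_bigl => x; rewrite inE.
rewrite !fiberE -(card_fiber y y_im); apply: phased_in_weighted_len_le => //.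
  by case/imsetP: y_im => x _ ->; apply/card_gt0P; exists x; rewrite inE.
exact: code_fiber.
Qed.

Lemma entropy_add_divergence {R : realType} {S : finType} (p q : S -> R) :
  (forall s, 0 < p s) -> (forall s, 0 < q s) ->
  entropy p + divergence p q = \sum_s p s * lg (q s)^-1.
Proof.
move=> p_gt0 q_gt0; rewrite /entropy /divergence -sumrN -big_split /=.
by apply: eq_bigr => s _; rewrite lgM ?invr_gt0 // mulrDr addKr.
Qed.

Lemma qdistV {R : realType} {S X : finType} (F : X -> S -> X) (s : S) :
  (Ns F s %| #|X|)%N -> (0 < Ns F s)%N ->
  (qdist R F s)^-1 = (#|X| %/ Ns F s)%:R.
Proof.
move=> Ns_dvd Ns_gt0.
by rewrite /qdist invf_div natr_div // unitfE pnatr_eq0 -lt0n.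
Qed.

Theorem theorem4 (R : realType) (S X : finType) (p : S -> R)
  (E : X -> S -> seq bool) (F : X -> S -> X) (Q : X -> R) :
  (2 <= #|S|)%N ->
  (forall s, 0 < p s) -> \sum_s p s = 1 ->
  is_AEDS E F -> is_sAEDS F -> is_stationary p F Q ->
  (forall s, (Ns F s %| #|X|)%N) ->
  (forall s x, x \in Xs F s -> #|Fplus F s x| = (#|X| %/ Ns F s)%N) ->
  (forall s x, x \in Xs F s -> phased_in_matched Q (Fplus F s x) (fun xh => E xh s)) ->
  avg_len p Q E <= entropy p + divergence p (@qdist R S X F) + sigma_const R.
Proof.
move=> _ p_gt0 p_sum1 _ _ [Q_ge0 [Q_sum1 _]] Ns_dvd card_Fplus code_Fplus.
have X_gt0 : (0 < #|X|)%N.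
  case: (posnP #|X|) => [/card0_eq X0 | //].
  by move: Q_sum1; rewrite big_pred0 // => /esym/eqP; rewrite oner_eq0.
have Ns_gt0 s : (0 < Ns F s)%N.
  have /card_gt0P[x0 _] := X_gt0.
  by apply/card_gt0P; exists (F x0 s); exact: imset_f.
have q_gt0 s : 0 < qdist R F s by rewrite divr_gt0 ?ltr0n.
have per_symbol s :
    \sum_xh Q xh * (size (E xh s))%:R <= lg (qdist R F s)^-1 + sigma_const R.
  rewrite qdistV // -[lg _ + _]mul1r -[X in X * _]Q_sum1.
  apply: (fibers_phased_in_weighted_len_le _ (fun xh => F xh s)) => //.
  - exact: card_Fplus.
  - exact: code_Fplus.
rewrite entropy_add_divergence // -[sigma_const R]mul1r -[X in X * _]p_sum1.
rewrite mulr_suml -big_split /= /avg_len exchange_big; apply: ler_sum => s _.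
under eq_bigr do rewrite -mulrA.
rewrite -mulr_sumr -mulrDr.
by apply: ler_wpM2l; [exact: ltW | exact: per_symbol].
Qed.
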